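(* Let $G$ be a connected finite simple graph. If $G$ has a cut-vertex, then $\alpha^*(G)\geq 2$.
   Context: An independent set $I$ of $G$ is light if $\sum_{u\in I}d_G(u)\le |V(G)|-1$; $\alpha^*(G)$ is the maximum size of a light independent set of $G$. *)

From mathcomp Require Import all_boot.
Set Implicit Arguments. Unset Strict Implicit. Unset Printing Implicit Defensive.

Definition simple_graph (T : finType) (e : rel T) : Prop :=
  symmetric e /\ irreflexive e.

Definition deg (T : finType) (e : rel T) (x : T) : nat := #|[set y | e x y]|.

Definition connected_graph (T : finType) (e : rel T) : Prop :=
  forall x y : T, connect e x y.

Definition del_vertex (T : finType) (e : rel T) (v : T) : rel T :=
  [rel a b | [&& e a b, a != v & b != v]].

Definition cut_vertex (T : finType) (e : rel T) (v : T) : Prop :=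
  exists x y : T, [/\ x != v, y != v & ~~ connect (del_vertex e v) x y].

Definition independent (T : finType) (e : rel T) (I : {set T}) : bool :=
  [forall x in I, forall y in I, ~~ e x y].

Definition light (T : finType) (e : rel T) (I : {set T}) : bool :=
  independent e I && (\sum_(u in I) deg e u <= #|T| - 1).

Definition alpha_star (T : finType) (e : rel T) : nat :=
  \max_(I : {set T} | light e I) #|I|.

From mathcomp Require Import all_boot.

Set Implicit Arguments.
Unset Strict Implicit.
Unset Printing Implicit Defensive.

(* Let x and y lie in different components of G - v, and let C be the
   component of x.  Every neighbour of x lies in C or is v, so
   deg x <= |C|; every neighbour of y lies outside C and differs from y,
   so deg y < |V \ C|.  Hence deg x + deg y <= |V| - 1, and {x, y} is a
   light independent set (x and y are not adjacent, being disconnected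
   in G - v). *)

Section DeletedVertexComponent.

Variables (T : finType) (e : rel T).
Hypotheses (esym : symmetric e) (eirr : irreflexive e).
Variables (v x : T).
Hypothesis xv : x != v.

Let C := [set z | connect (del_vertex e v) x z].

Lemma mem_component : x \in C.
Proof. by rewrite inE connect0. Qed.

Lemma component_neq_vertex z : z \in C -> z != v.
Proof.
rewrite inE => /connectP [p]; elim: p x xv => [|a p IH] b bv /=.
  by move=> _ ->.
by case/andP => /and3P [_ _ av] pa; apply: IH.
Qed.

Lemma component_closed a b : a \in C -> e a b -> b != v -> b \in C.
Proof.
move=> aC eab bv; have av := component_neq_vertex aC.
rewrite !inE in aC *; apply: connect_trans aC _; apply: connect1.
by rewrite /del_vertex /= eab av bv.
Qed.

Lemma deg_le_component : deg e x <= #|C|.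
Proof.
have vC : v \notin C by apply/negP => /component_neq_vertex; rewrite eqxx.
have sub : [set z | e x z] \subset v |: (C :\ x).
  apply/subsetP => z; rewrite inE in_setU1 in_setD1 => exz.
  have [//|zv /=] := eqVneq z v.
  rewrite (component_closed mem_component exz zv) andbT.
  by apply: contraTneq exz => ->; rewrite eirr.
have := subset_leq_card sub.
by rewrite cardsU1 in_setD1 (negbTE vC) andbF (cardsD1 x C) mem_component.
Qed.

Lemma deg_lt_outside_component y :
  y \notin C -> y != v -> deg e y < #|~: C|.
Proof.
move=> yC yv.
have sub : [set z | e y z] \subset ~: C :\ y.
  apply/subsetP => z; rewrite inE in_setD1 in_setC => eyz.
  apply/andP; split; first by apply: contraTneq eyz => ->; rewrite eirr.
  apply: contra yC => zC; apply: component_closed zC _ yv.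
  by rewrite esym.
have := subset_leq_card sub.
by rewrite (cardsD1 y (~: C)) in_setC yC.
Qed.

End DeletedVertexComponent.

Lemma light_pair (T : finType) (e : rel T) (x y : T) :
  simple_graph e -> x != y -> ~~ e x y -> deg e x + deg e y < #|T| ->
  light e [set x; y].
Proof.
move=> [esym eirr] xy nexy degs.
apply/andP; split.
  apply/forallP => a; apply/implyP; rewrite !inE => /orP [] /eqP ->;
  apply/forallP => b; apply/implyP; rewrite !inE => /orP [] /eqP ->;
  by rewrite ?eirr // esym.
rewrite big_setU1 /= ?inE ?(negbTE xy) // big_set1.
by rewrite subn1 -ltnS prednK // (leq_ltn_trans _ degs).
Qed.

Lemma light_card_le_alpha_star (T : finType) (e : rel T) (I : {set T}) :
  light e I -> #|I| <= alpha_star e.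
Proof. exact: (@leq_bigmax_cond _ (light e) (fun I : {set T} => #|I|)). Qed.

Theorem lemma2p3 (T : finType) (e : rel T) :
  simple_graph e -> connected_graph e -> (exists v : T, cut_vertex e v) ->
  2 <= alpha_star e.
Proof.
move=> G _ [v [x [y [xv yv nxy]]]]; have [esym eirr] := G.
set C := [set z | connect (del_vertex e v) x z].
have yC : y \notin C by rewrite inE.
have xy : x != y by apply: contraNneq yC => <-; apply: mem_component.
have nexy : ~~ e x y.
  by apply: contra nxy => exy; apply: connect1; rewrite /del_vertex /= exy xv yv.
have degs : deg e x + deg e y < #|T|.
  rewrite -(cardsC C) -addnS leq_add ?deg_le_component //.
  exact: deg_lt_outside_component.
have := light_card_le_alpha_star (light_pair G xy nexy degs).
by rewrite cards2 xy.
Qed.
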